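(* The following identities hold: $$\sum_{n=1}^{\infty}\frac{1}{4^n(2n+1)^2}\frac{\binom{4n}{2n}}{\binom{2n}{n}}=3-2\sqrt{2},\qquad \sum_{n=1}^{\infty}\frac{1}{4^n(2n+1)(2n+3)}\frac{\binom{4n}{2n}}{\binom{2n+2}{n+1}}=\frac{11-7\sqrt{2}}{30},$$ $$\sum_{n=1}^{\infty}\frac{1}{4^n(2n+1)(2n+5)}\frac{\binom{4n}{2n}}{\binom{2n+4}{n+2}}=\frac{172-107\sqrt{2}}{2520},\qquad \sum_{n=1}^{\infty}\frac{1}{4^n(2n+1)(2n+7)}\frac{\binom{4n}{2n}}{\binom{2n+6}{n+3}}=\frac{6808-4175\sqrt{2}}{480480}.$$ *)

From Stdlib Require Import Reals.
From Coquelicot Require Export Coquelicot.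
Open Scope R_scope.

Definition term (k n : nat) : R :=
  Binomial.C (4 * n) (2 * n) /
  (4 ^ n * INR (2 * n + 1) * INR (2 * n + 2 * k + 1) *
   Binomial.C (2 * n + 2 * k) (n + k)).

Definition series_from1 (k : nat) : nat -> R := fun m => term k (S m).

(* With [cb m = C(2m, m) / 4^m], the n-th term of the k-th series is
   [cb (2n) / (4^k (2n+1) (2n+2k+1) cb (n+k))].  For k = 0, Wallis'
   [int_0^(PI/2) sin^(2n+1) = 1 / ((2n+1) cb n)] and the expansion
   [sqrt (1+s) - sqrt (1-s) = sum_n cb (2n) s^(2n+1) / (2n+1)], whose left side
   is [2 sin (t/2)] at [s = sin t], give for the series summed from [n = 0]
   the value [int_0^(PI/2) 2 sin (t/2) dt = 4 - 2 sqrt 2].  The integrals are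
   handled through explicit primitives and the mean value theorem: the error of
   the truncated expansion is uniformly small on [0 <= s <= r < 1], and its
   slope stays in [0, 2] up to [t = PI/2].  For k = 1, 2, 3 the term minus a
   rational multiple of the k = 0 term telescopes against a rational function
   of n times [cb (2n) / cb n], which tends to 0. *)

From Stdlib Require Import Reals Lra Lia.
From Coquelicot Require Import Coquelicot.
Open Scope R_scope.

(* [is_derive_ext] states its equation in [NormedModule.sort], where [ring] does not apply. *)
Lemma is_derive_ext_R (f g : R -> R) (x l : R) :
  (forall t, f t = g t) -> is_derive f x l -> is_derive g x l.
Proof. apply is_derive_ext. Qed.

Lemma continuity_pt_of_is_derive (f : R -> R) (x l : R) :
  is_derive f x l -> continuity_pt f x.
Proof.
  intros Hd. apply continuity_pt_filterlim, (ex_derive_continuous f x). exists l. exact Hd.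
Qed.

Lemma increment_bounds (f df : R -> R) (a b lo hi : R) : a <= b ->
  (forall x, a <= x <= b -> is_derive f x (df x)) ->
  (forall x, a < x < b -> lo <= df x <= hi) ->
  lo * (b - a) <= f b - f a <= hi * (b - a).
Proof.
  intros Hab Hd Hbnd. destruct (Rle_lt_or_eq_dec a b Hab) as [Hlt | <-].
  - destruct (MVT_cor2 f df a b Hlt) as [c [Hmvt Hc]].
    { intros c Hc. apply is_derive_Reals, Hd, Hc. }
    rewrite Hmvt. specialize (Hbnd c Hc). split; apply Rmult_le_compat_r; lra.
  - rewrite !Rminus_diag. lra.
Qed.

Lemma odd_pow_mul_nonneg N c x : 0 <= c * x -> 0 <= c ^ (2 * N + 1) * x.
Proof.
  intros Hcx.
  replace (c ^ (2 * N + 1) * x) with ((c ^ 2) ^ N * (c * x))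
    by (rewrite <- pow_mult, pow_add; ring).
  apply Rmult_le_pos; [apply pow_le; nra | exact Hcx].
Qed.

Lemma sin_lt_1 (t : R) : 0 <= t < PI / 2 -> sin t < 1.
Proof.
  intros Ht. pose proof PI_RGT_0. rewrite <- sin_PI2.
  apply sin_increasing_1; lra.
Qed.

Lemma sin_half_angle (t : R) : 0 <= t <= PI / 2 ->
  2 * sin (t / 2) = sqrt (1 + sin t) - sqrt (1 - sin t).
Proof.
  intros Ht. pose proof PI_RGT_0. set (u := t / 2).
  assert (Hsin : sin t = 2 * sin u * cos u)
    by (rewrite <- sin_2a; f_equal; unfold u; field).
  pose proof (sin2_cos2 u) as Hsc. unfold Rsqr in Hsc.
  assert (0 <= sin u) by (apply sin_ge_0; unfold u; lra).
  assert (sin u <= cos u).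
  { rewrite <- sin_shift. apply sin_incr_1; unfold u; lra. }
  rewrite Hsin.
  replace (1 + 2 * sin u * cos u) with (Rsqr (cos u + sin u)) by (unfold Rsqr; nra).
  replace (1 - 2 * sin u * cos u) with (Rsqr (cos u - sin u)) by (unfold Rsqr; nra).
  rewrite !sqrt_Rsqr by lra. ring.
Qed.

Lemma is_lim_seq_succ_mul_pow (r : R) : Rabs r < 1 ->
  is_lim_seq (fun n => INR (S n) * r ^ n) 0.
Proof.
  intros Hr.
  assert (Hrad : CV_radius (fun _ => 1) = 1).
  { rewrite (CV_radius_finite_DAlembert _ 1); [now rewrite Rinv_1 | intros _; lra | lra |].
    apply is_lim_seq_ext with (fun _ => 1);
      [intros n; simpl; rewrite Rdiv_1_r, Rabs_R1; reflexivity | apply is_lim_seq_const]. }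
  assert (Hex : ex_pseries (PS_derive (fun _ => 1)) r).
  { apply CV_radius_inside. rewrite CV_radius_derive, Hrad. exact Hr. }
  apply is_lim_seq_ext with (fun n => scal (pow_n r n) (PS_derive (fun _ => 1) n)).
  - intros n. rewrite pow_n_pow. unfold PS_derive, scal. simpl. unfold mult. simpl. ring.
  - apply ex_series_lim_0, Hex.
Qed.

Lemma is_series_telescoping (V : nat -> R) :
  is_lim_seq V 0 -> is_series (fun n => V (S n) - V n) (- V O).
Proof.
  intros HV. apply is_lim_seq_incr_1, is_lim_seq_Reals in HV.
  assert (Hsum : forall n, sum_f_R0 (fun m => V (S m) - V m) n = V (S n) - V O).
  { induction n as [|n IH]; [reflexivity|]. rewrite tech5, IH. ring. }
  apply is_series_Reals. intros e He. destruct (HV e He) as [N HN].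
  exists N. intros n Hn. unfold R_dist in *. rewrite Hsum.
  replace (V (S n) - V O - - V O) with (V (S n) - 0) by ring. exact (HN n Hn).
Qed.

(* The m-th Taylor coefficient of [(1 - x) ^ (-1/2)]. *)
Fixpoint cb (m : nat) : R :=
  match m with O => 1 | S p => cb p * (2 * INR p + 1) / (2 * INR p + 2) end.

Lemma cb_S m : cb (S m) = cb m * (2 * INR m + 1) / (2 * INR m + 2).
Proof. reflexivity. Qed.

Lemma cb_pos m : 0 < cb m.
Proof.
  induction m as [|m IH]; rewrite ?cb_S; [simpl; lra|].
  pose proof (pos_INR m).
  apply Rdiv_lt_0_compat; [apply Rmult_lt_0_compat|]; lra.
Qed.

Lemma cb_le_of_le m n : (m <= n)%nat -> cb n <= cb m.
Proof.
  induction 1 as [|n _ IH]; [lra|].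
  rewrite cb_S. pose proof (cb_pos n). pose proof (pos_INR n).
  apply Rle_trans with (cb n); [|exact IH].
  apply Rmult_le_reg_r with (2 * INR n + 2); [lra|].
  field_simplify; lra.
Qed.

Lemma cb_le_1 m : cb m <= 1.
Proof. apply (cb_le_of_le 0); lia. Qed.

Lemma C_central m : Binomial.C (2 * m) m = 4 ^ m * cb m.
Proof.
  induction m as [|m IH]; [unfold Binomial.C; simpl; field|].
  rewrite cb_S, <- tech_pow_Rmult.
  replace (4 * 4 ^ m * (cb m * (2 * INR m + 1) / (2 * INR m + 2)))
    with (4 ^ m * cb m * (4 * (2 * INR m + 1) / (2 * INR m + 2))) by (unfold Rdiv; ring).
  rewrite <- IH. unfold Binomial.C.
  replace (2 * S m - S m)%nat with (S m) by lia.
  replace (2 * m - m)%nat with m by lia.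
  replace (2 * S m)%nat with (S (S (2 * m))) by lia.
  rewrite !fact_simpl, !mult_INR, !S_INR, mult_INR.
  pose proof (INR_fact_neq_0 m). pose proof (INR_fact_neq_0 (2 * m)). pose proof (pos_INR m).
  simpl (INR 2). field. lra.
Qed.

Lemma term_cb k n :
  term k n = cb (2 * n) /
    (4 ^ k * (2 * INR n + 1) * (2 * INR n + 2 * INR k + 1) * cb (n + k)).
Proof.
  unfold term.
  replace (4 * n)%nat with (2 * (2 * n))%nat by lia.
  replace (2 * n + 2 * k)%nat with (2 * (n + k))%nat by lia.
  rewrite !C_central, pow_add, !plus_INR, !mult_INR, plus_INR.
  replace (4 ^ (2 * n)) with (4 ^ n * 4 ^ n) by (rewrite <- pow_add; f_equal; lia).
  pose proof (cb_pos (n + k)). pose proof (pos_INR n). pose proof (pos_INR k).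
  pose proof (pow_lt 4 n ltac:(lra)). pose proof (pow_lt 4 k ltac:(lra)).
  replace (INR 2) with 2 by reflexivity. replace (INR 1) with 1 by reflexivity.
  field. repeat split; lra.
Qed.

Definition cb_poly (M : nat) (x : R) : R := sum_f_R0 (fun m => cb m * x ^ m) M.

Lemma cb_poly_0 M : cb_poly M 0 = 1.
Proof.
  induction M as [|M IH]; unfold cb_poly in *; simpl; [ring|].
  rewrite IH. ring.
Qed.

(* The derivative telescopes because [(m + 1) cb (m + 1) = (m + 1/2) cb m]. *)
Lemma is_derive_cb_poly_sqrt M x : x < 1 ->
  is_derive (fun y => cb_poly M y * sqrt (1 - y)) x
    (- (INR M + / 2) * cb M * x ^ M / sqrt (1 - x)).
Proof.
  intros Hx.
  pose proof (sqrt_lt_R0 (1 - x) ltac:(lra)) as Hs.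
  pose proof (sqrt_sqrt (1 - x) ltac:(lra)) as Hss.
  induction M as [|M IH].
  - apply is_derive_ext_R with (fun y => sqrt (1 - y)).
    { intros y; unfold cb_poly; simpl; ring. }
    auto_derive; [lra|]. replace (1 + - x) with (1 - x) by ring. simpl. field. lra.
  - apply is_derive_ext_R
      with (fun y => cb_poly M y * sqrt (1 - y) + cb (S M) * (y ^ S M * sqrt (1 - y))).
    { intros y; unfold cb_poly; simpl; ring. }
    replace (- (INR (S M) + / 2) * cb (S M) * x ^ S M / sqrt (1 - x))
      with (- (INR M + / 2) * cb M * x ^ M / sqrt (1 - x)
            + cb (S M) * (INR (S M) * x ^ M * sqrt (1 - x) - x ^ S M / (2 * sqrt (1 - x)))).
    + apply (is_derive_plus (fun y => cb_poly M y * sqrt (1 - y))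
        (fun y => cb (S M) * (y ^ S M * sqrt (1 - y)))); [exact IH|].
      apply is_derive_scal. auto_derive; [lra|].
      change (match M with 0%nat => 1 | S _ => INR M + 1 end) with (INR (S M)).
      replace (1 + - x) with (1 - x) by ring. simpl pow. field. lra.
    + rewrite cb_S, S_INR. simpl pow.
      (* Write [x = 1 - s * s] with [s = sqrt (1 - x)], so that [field] can use it. *)
      set (s := sqrt (1 - x)) in *. set (X := x ^ M).
      assert (Hx' : x = 1 - s * s) by lra.
      pose proof (pos_INR M). clearbody s X. subst x.
      field. lra.
Qed.

Lemma cb_poly_sqrt_remainder (M : nat) (x : R) : x < 1 ->
  exists c, Rabs c <= Rabs x /\ 0 <= c * x /\
    1 - cb_poly M x * sqrt (1 - x) = (INR M + / 2) * cb M * (c ^ M * x) / sqrt (1 - c).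
Proof.
  intros Hx.
  assert (Hmax : Rmax 0 x < 1) by (apply Rmax_lub_lt; lra).
  destruct (MVT_gen (fun y => cb_poly M y * sqrt (1 - y)) 0 x
              (fun y => - (INR M + / 2) * cb M * y ^ M / sqrt (1 - y)))
    as [c [Hc Hmvt]].
  - intros y Hy. apply is_derive_cb_poly_sqrt. lra.
  - intros y Hy. eapply continuity_pt_of_is_derive, is_derive_cb_poly_sqrt. lra.
  - exists c.
    assert (Hcx : Rabs c <= Rabs x /\ 0 <= c * x).
    { unfold Rmin, Rmax in Hc. destruct (Rle_dec 0 x).
      - rewrite !Rabs_pos_eq by lra. split; nra.
      - rewrite !Rabs_left1 by lra. split; nra. }
    split; [tauto | split; [tauto|]].
    pose proof (sqrt_lt_R0 (1 - c) ltac:(lra)).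
    rewrite cb_poly_0, !Rminus_0_r, sqrt_1 in Hmvt.
    field_simplify in Hmvt; [|lra]. field_simplify; lra.
Qed.

Lemma cb_poly_sqrt_odd_bounds (N : nat) (r x : R) : 0 <= r < 1 -> Rabs x <= r ->
  0 <= 1 - cb_poly (2 * N + 1) x * sqrt (1 - x)
    <= INR (2 * N + 2) * r ^ (2 * N + 1) / sqrt (1 - r).
Proof.
  intros Hr Hx. set (M := (2 * N + 1)%nat).
  pose proof (proj1 (Rabs_le_between x r) Hx).
  destruct (cb_poly_sqrt_remainder M x ltac:(lra)) as [c [Hcx [Hsign Hrem]]].
  rewrite Hrem.
  pose proof (proj1 (Rabs_le_between c r) ltac:(lra)).
  pose proof (sqrt_lt_R0 (1 - c) ltac:(lra)). pose proof (sqrt_lt_R0 (1 - r) ltac:(lra)).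
  assert (Hodd : 0 <= c ^ M * x) by (apply odd_pow_mul_nonneg, Hsign).
  assert (Hpow : c ^ M * x <= r ^ M).
  { rewrite <- (Rabs_pos_eq _ Hodd), Rabs_mult, <- RPow_abs.
    replace (r ^ M) with (r ^ M * 1) by ring.
    apply Rmult_le_compat; [apply pow_le, Rabs_pos | apply Rabs_pos | |].
    - apply pow_incr. split; [apply Rabs_pos | lra].
    - lra. }
  assert (Hcoef : (INR M + / 2) * cb M <= INR (2 * N + 2)).
  { pose proof (cb_pos M). pose proof (cb_le_1 M). pose proof (pos_INR M).
    replace (INR (2 * N + 2)) with (INR M + 1) by (unfold M; rewrite !plus_INR; simpl; ring).
    nra. }
  assert (sqrt (1 - r) <= sqrt (1 - c)) by (apply sqrt_le_1_alt; lra).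
  pose proof (cb_pos M). pose proof (pos_INR M).
  split.
  - apply Rdiv_le_0_compat; [apply Rmult_le_pos; [apply Rmult_le_pos|]|]; lra.
  - unfold Rdiv. apply Rmult_le_compat.
    + apply Rmult_le_pos; [apply Rmult_le_pos|]; lra.
    + left. apply Rinv_0_lt_compat. lra.
    + apply Rmult_le_compat; [apply Rmult_le_pos| | |]; lra.
    + apply Rinv_le_contravar; lra.
Qed.

Definition sqrt_diff_coef (n : nat) : R := cb (2 * n) / (2 * INR n + 1).

Definition sqrt_diff_poly (N : nat) (s : R) : R :=
  sum_f_R0 (fun n => sqrt_diff_coef n * s ^ (2 * n + 1)) N.

Lemma sqrt_diff_coef_pos n : 0 < sqrt_diff_coef n.
Proof. apply Rdiv_lt_0_compat; [apply cb_pos | pose proof (pos_INR n); lra]. Qed.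

Lemma sqrt_diff_poly_nonneg N s : 0 <= s -> 0 <= sqrt_diff_poly N s.
Proof.
  intros Hs. apply cond_pos_sum. intros n.
  apply Rmult_le_pos; [left; apply sqrt_diff_coef_pos | apply pow_le, Hs].
Qed.

Lemma sqrt_diff_poly_0 (N : nat) : sqrt_diff_poly N 0 = 0.
Proof.
  unfold sqrt_diff_poly. induction N as [|N IH]; [simpl; ring|].
  rewrite tech5, IH, pow_i by lia. ring.
Qed.

Lemma is_derive_sqrt_diff_monomial (n : nat) (s : R) :
  is_derive (fun y => sqrt_diff_coef n * y ^ (2 * n + 1)) s (cb (2 * n) * s ^ (2 * n)).
Proof.
  replace (2 * n + 1)%nat with (S (2 * n)) by lia.
  replace (cb (2 * n) * s ^ (2 * n))
    with (sqrt_diff_coef n * (INR (S (2 * n)) * 1 * s ^ pred (S (2 * n)))).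
  - apply is_derive_scal, (is_derive_pow (fun y => y)).
    exact (is_derive_id (K := R_AbsRing) s).
  - unfold sqrt_diff_coef. rewrite Nat.pred_succ, S_INR, mult_INR.
    pose proof (pos_INR n). replace (INR 2) with 2 by reflexivity. field. lra.
Qed.

Lemma is_derive_sqrt_diff_poly (N : nat) (s : R) :
  is_derive (sqrt_diff_poly N) s (sum_f_R0 (fun n => cb (2 * n) * s ^ (2 * n)) N).
Proof.
  induction N as [|N IH]; [apply is_derive_sqrt_diff_monomial|].
  apply (is_derive_plus (sqrt_diff_poly N)
    (fun y => sqrt_diff_coef (S N) * y ^ (2 * S N + 1)));
    [exact IH | apply is_derive_sqrt_diff_monomial].
Qed.

Lemma even_part_cb_poly (N : nat) (s : R) :
  sum_f_R0 (fun n => cb (2 * n) * s ^ (2 * n)) N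
  = (cb_poly (2 * N + 1) s + cb_poly (2 * N + 1) (- s)) / 2.
Proof.
  assert (Heven : forall k, (- s) ^ (2 * k) = s ^ (2 * k))
    by (intros k; rewrite !pow_mult; f_equal; ring).
  induction N as [|N IH]; [unfold cb_poly; simpl; field|].
  rewrite tech5, IH.
  replace (2 * S N + 1)%nat with (S (S (2 * N + 1))) by lia.
  unfold cb_poly. rewrite !tech5.
  replace (S (2 * N + 1)) with (2 * S N)%nat by lia.
  replace (S (2 * S N)) with (2 * S N + 1)%nat by lia.
  rewrite !pow_add, !Heven. field.
Qed.

Lemma is_derive_sqrt_diff_remainder (N : nat) (y : R) : -1 < y < 1 ->
  is_derive (fun s => sqrt (1 + s) - sqrt (1 - s) - sqrt_diff_poly N s) y
    (((1 - cb_poly (2 * N + 1) y * sqrt (1 - y)) / sqrt (1 - y)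
      + (1 - cb_poly (2 * N + 1) (- y) * sqrt (1 + y)) / sqrt (1 + y)) / 2).
Proof.
  intros Hy.
  pose proof (sqrt_lt_R0 (1 - y) ltac:(lra)). pose proof (sqrt_lt_R0 (1 + y) ltac:(lra)).
  replace (((1 - cb_poly (2 * N + 1) y * sqrt (1 - y)) / sqrt (1 - y)
      + (1 - cb_poly (2 * N + 1) (- y) * sqrt (1 + y)) / sqrt (1 + y)) / 2)
    with (/ (2 * sqrt (1 + y)) + / (2 * sqrt (1 - y))
          - sum_f_R0 (fun n => cb (2 * n) * y ^ (2 * n)) N)
    by (rewrite even_part_cb_poly; field; lra).
  apply (is_derive_minus (fun s => sqrt (1 + s) - sqrt (1 - s)) (sqrt_diff_poly N));
    [|apply is_derive_sqrt_diff_poly].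
  auto_derive; [lra|]. replace (1 + - y) with (1 - y) by ring. field. lra.
Qed.

Definition sqrt_diff_error (N : nat) (r : R) : R :=
  INR (2 * N + 2) * r ^ (2 * N + 1) / (1 - r).

Lemma sqrt_diff_error_nonneg (N : nat) (r : R) : 0 <= r < 1 -> 0 <= sqrt_diff_error N r.
Proof.
  intros Hr.
  apply Rdiv_le_0_compat; [apply Rmult_le_pos; [apply pos_INR | apply pow_le]|]; lra.
Qed.

Lemma sqrt_diff_error_small (r e : R) : 0 <= r < 1 -> 0 < e ->
  exists N0, forall N, (N0 <= N)%nat -> sqrt_diff_error N r < e.
Proof.
  intros Hr He.
  destruct (proj1 (is_lim_seq_Reals _ 0)
              (is_lim_seq_succ_mul_pow r ltac:(rewrite Rabs_pos_eq; lra))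
              (e * (1 - r)) ltac:(nra)) as [N0 HN0].
  exists N0. intros N HN. specialize (HN0 (2 * N + 1)%nat ltac:(lia)).
  unfold R_dist in HN0.
  rewrite Rminus_0_r, Rabs_pos_eq in HN0
    by (apply Rmult_le_pos; [apply pos_INR | apply pow_le; lra]).
  replace (S (2 * N + 1)) with (2 * N + 2)%nat in HN0 by lia.
  apply Rlt_div_l; lra.
Qed.

Lemma sqrt_diff_poly_approx (N : nat) (r s : R) : 0 <= s <= r -> r < 1 ->
  0 <= sqrt (1 + s) - sqrt (1 - s) - sqrt_diff_poly N s <= sqrt_diff_error N r.
Proof.
  intros Hs Hr.
  set (K := INR (2 * N + 2) * r ^ (2 * N + 1) / sqrt (1 - r)).
  pose proof (sqrt_lt_R0 (1 - r) ltac:(lra)) as Hsr.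
  assert (HK : sqrt_diff_error N r = K / sqrt (1 - r))
    by (unfold sqrt_diff_error, K; rewrite <- (sqrt_sqrt (1 - r)) at 1 by lra; field; lra).
  assert (HK0 : 0 <= K).
  { apply Rdiv_le_0_compat; [apply Rmult_le_pos; [apply pos_INR | apply pow_le]|]; lra. }
  destruct (increment_bounds _ _ 0 s 0 (K / sqrt (1 - r)) (proj1 Hs)
    (fun y Hy => is_derive_sqrt_diff_remainder N y ltac:(lra))) as [Hlo Hhi].
  - intros y Hy.
    destruct (cb_poly_sqrt_odd_bounds N r y) as [Hp1 Hp2];
      [lra | rewrite Rabs_pos_eq; lra |].
    destruct (cb_poly_sqrt_odd_bounds N r (- y)) as [Hm1 Hm2];
      [lra | rewrite Rabs_Ropp, Rabs_pos_eq; lra |].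
    replace (1 - - y) with (1 + y) in Hm1, Hm2 by ring.
    pose proof (sqrt_lt_R0 (1 - y) ltac:(lra)). pose proof (sqrt_lt_R0 (1 + y) ltac:(lra)).
    assert (sqrt (1 - r) <= sqrt (1 - y)) by (apply sqrt_le_1_alt; lra).
    assert (sqrt (1 - r) <= sqrt (1 + y)) by (apply sqrt_le_1_alt; lra).
    assert (Hdiv : forall p q, 0 <= p <= K -> sqrt (1 - r) <= q -> p / q <= K / sqrt (1 - r)).
    { intros p q Hp Hq. unfold Rdiv. apply Rmult_le_compat; try lra.
      - left. apply Rinv_0_lt_compat. lra.
      - apply Rinv_le_contravar; lra. }
    pose proof (Hdiv _ _ (conj Hp1 Hp2) H1). pose proof (Hdiv _ _ (conj Hm1 Hm2) H2).
    split.
    + apply Rmult_le_pos; [|lra].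
      apply Rplus_le_le_0_compat; apply Rdiv_le_0_compat; lra.
    + lra.
  - assert (Hphi0 : sqrt (1 + 0) - sqrt (1 - 0) - sqrt_diff_poly N 0 = 0)
      by (rewrite sqrt_diff_poly_0, Rplus_0_r, !Rminus_0_r; lra).
    rewrite Hphi0, !Rminus_0_r in Hlo, Hhi. rewrite <- HK in Hhi.
    pose proof (sqrt_diff_error_nonneg N r ltac:(lra)).
    split; nra.
Qed.

(* Evaluated at [0] and [PI/2], this primitive gives Wallis'
   [int_0^(PI/2) sin^(2n+1) = 1 / ((2n+1) cb n)]. *)
Definition wallis_primitive (n : nat) (t : R) : R := cos t * cb_poly n (sin t ^ 2).

Lemma is_derive_wallis_primitive (n : nat) (t : R) :
  is_derive (wallis_primitive n) t (- (2 * INR n + 1) * cb n * sin t ^ (2 * n + 1)).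
Proof.
  induction n as [|n IH].
  - apply is_derive_ext_R with cos; [intros y; unfold wallis_primitive, cb_poly; simpl; ring|].
    auto_derive; [exact I | simpl; ring].
  - apply is_derive_ext_R
      with (fun y => wallis_primitive n y + cb (S n) * (cos y * sin y ^ (2 * S n))).
    { intros y. unfold wallis_primitive, cb_poly. rewrite tech5, <- pow_mult. ring. }
    replace (- (2 * INR (S n) + 1) * cb (S n) * sin t ^ (2 * S n + 1))
      with (- (2 * INR n + 1) * cb n * sin t ^ (2 * n + 1)
            + cb (S n) * (- sin t ^ (2 * S n + 1)
                          + INR (2 * S n) * (cos t * cos t) * sin t ^ (2 * n + 1))).
    + apply (is_derive_plus (wallis_primitive n)
        (fun y => cb (S n) * (cos y * sin y ^ (2 * S n)))); [exact IH|].
      apply is_derive_scal. auto_derive; [exact I|].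
      change (match (n + S (n + 0))%nat with 0%nat => 1 | S _ => INR (n + S (n + 0)) + 1 end)
        with (INR (S (n + S (n + 0)))).
      replace (n + S (n + 0))%nat with (2 * n + 1)%nat by lia.
      replace (2 * S n + 1)%nat with (S (S (2 * n + 1))) by lia.
      replace (2 * S n)%nat with (S (2 * n + 1)) by lia.
      rewrite <- !tech_pow_Rmult. ring.
    + assert (Hcos : cos t * cos t = 1 - sin t * sin t)
        by (pose proof (sin2_cos2 t) as H; unfold Rsqr in H; lra).
      replace (2 * S n + 1)%nat with (S (S (2 * n + 1))) by lia.
      rewrite Hcos, cb_S, <- !tech_pow_Rmult, mult_INR.
      replace (INR 2) with 2 by reflexivity. rewrite S_INR. pose proof (pos_INR n).
      field. lra.
Qed.

Lemma wallis_primitive_0 n : wallis_primitive n 0 = 1.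
Proof.
  unfold wallis_primitive. rewrite cos_0, sin_0, pow_i, cb_poly_0 by lia. ring.
Qed.

Lemma wallis_primitive_PI2 n : wallis_primitive n (PI / 2) = 0.
Proof. unfold wallis_primitive. rewrite cos_PI2. ring. Qed.

Lemma is_derive_wallis_sum (N : nat) (t : R) :
  is_derive (fun y => sum_f_R0 (fun n => term 0 n * (1 - wallis_primitive n y)) N) t
    (sqrt_diff_poly N (sin t)).
Proof.
  assert (Hterm : forall n, is_derive (fun y => term 0 n * (1 - wallis_primitive n y)) t
                              (sqrt_diff_coef n * sin t ^ (2 * n + 1))).
  { intros n.
    replace (sqrt_diff_coef n * sin t ^ (2 * n + 1))
      with (term 0 n * (0 - - (2 * INR n + 1) * cb n * sin t ^ (2 * n + 1))).
    - apply is_derive_scal.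
      apply (is_derive_minus (fun _ => 1) (wallis_primitive n));
        [exact (is_derive_const (K := R_AbsRing) 1 t) | apply is_derive_wallis_primitive].
    - rewrite term_cb. unfold sqrt_diff_coef.
      replace (n + 0)%nat with n by lia. replace (INR 0) with 0 by reflexivity.
      pose proof (cb_pos n). pose proof (pos_INR n).
      field. lra. }
  induction N as [|N IH]; [apply Hterm|].
  apply (is_derive_plus _ (fun y => term 0 (S N) * (1 - wallis_primitive (S N) y)));
    [exact IH | apply Hterm].
Qed.

Definition gap (N : nat) (t : R) : R :=
  4 - 4 * cos (t / 2) - sum_f_R0 (fun n => term 0 n * (1 - wallis_primitive n t)) N.

Lemma is_derive_gap (N : nat) (t : R) :
  is_derive (gap N) t (2 * sin (t / 2) - sqrt_diff_poly N (sin t)).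
Proof.
  apply (is_derive_minus (fun y => 4 - 4 * cos (y / 2))); [|apply is_derive_wallis_sum].
  auto_derive; [exact I|]. unfold Rdiv. lra.
Qed.

Lemma gap_0 (N : nat) : gap N 0 = 0.
Proof.
  unfold gap. replace (0 / 2) with 0 by field. rewrite cos_0.
  rewrite sum_eq_R0; [ring|]. intros n _. rewrite wallis_primitive_0. ring.
Qed.

Lemma gap_PI2 (N : nat) : gap N (PI / 2) = 4 - 2 * sqrt 2 - sum_f_R0 (term 0) N.
Proof.
  unfold gap. replace (PI / 2 / 2) with (PI / 4) by field. rewrite cos_PI4.
  rewrite (sum_eq _ (term 0)) by (intros n _; rewrite wallis_primitive_PI2; ring).
  assert (Hinv : 1 / sqrt 2 = sqrt 2 / 2).
  { pose proof (sqrt_lt_R0 2 ltac:(lra)). pose proof (sqrt_sqrt 2 ltac:(lra)).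
    field_simplify_eq; [simpl; lra | lra]. }
  rewrite Hinv. lra.
Qed.

Lemma gap_PI2_bounds (N : nat) (u : R) : 0 < u < PI / 2 ->
  0 <= gap N (PI / 2)
    <= 2 * (PI / 2 - u) + u * sqrt_diff_error N (sin u).
Proof.
  intros Hu. pose proof PI_RGT_0.
  set (eps := sqrt_diff_error N (sin u)).
  assert (Hd : forall t, 0 <= t <= PI / 2 ->
            is_derive (gap N) t (2 * sin (t / 2) - sqrt_diff_poly N (sin t)))
    by (intros t _; apply is_derive_gap).
  assert (Hslope : forall t, 0 < t < PI / 2 ->
            0 <= 2 * sin (t / 2) - sqrt_diff_poly N (sin t) <= 2).
  { intros t Ht.
    assert (0 <= sin t) by (apply sin_ge_0; lra).
    pose proof (sin_lt_1 t ltac:(lra)).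
    pose proof (sqrt_diff_poly_approx N (sin t) (sin t) ltac:(lra) ltac:(lra)) as Happrox.
    rewrite <- sin_half_angle in Happrox by lra.
    pose proof (sqrt_diff_poly_nonneg N (sin t) ltac:(lra)).
    pose proof (SIN_bound (t / 2)). lra. }
  assert (Hslope_small : forall t, 0 < t < u -> 2 * sin (t / 2) - sqrt_diff_poly N (sin t) <= eps).
  { intros t Ht. rewrite sin_half_angle by lra.
    assert (0 <= sin t) by (apply sin_ge_0; lra).
    assert (sin t <= sin u) by (apply sin_incr_1; lra).
    pose proof (sin_lt_1 u ltac:(lra)).
    apply (sqrt_diff_poly_approx N (sin u) (sin t)); lra. }
  assert (Heps : 0 <= eps).
  { apply sqrt_diff_error_nonneg. split; [apply sin_ge_0 | apply sin_lt_1]; lra. }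
  destruct (increment_bounds (gap N) _ 0 (PI / 2) 0 2 ltac:(lra) Hd Hslope) as [Hall _].
  destruct (increment_bounds (gap N) _ 0 u 0 eps ltac:(lra)
              (fun t Ht => Hd t ltac:(lra))
              (fun t Ht => conj (proj1 (Hslope t ltac:(lra))) (Hslope_small t Ht)))
    as [_ Hleft].
  destruct (increment_bounds (gap N) _ u (PI / 2) 0 2 ltac:(lra)
              (fun t Ht => Hd t ltac:(lra)) (fun t Ht => Hslope t ltac:(lra)))
    as [_ Hright].
  rewrite gap_0 in Hall, Hleft. nra.
Qed.

Lemma is_series_term0 : is_series (term 0) (4 - 2 * sqrt 2).
Proof.
  apply is_series_Reals. intros e He. pose proof PI_RGT_0.
  set (d := Rmin (e / 8) (PI / 4)).
  assert (Hd : 0 < d <= e / 8 /\ d <= PI / 4)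
    by (split; [split; [apply Rmin_glb_lt; lra | apply Rmin_l] | apply Rmin_r]).
  set (u := PI / 2 - d). assert (Hu : 0 < u < PI / 2) by (unfold u; lra).
  assert (Hr : 0 <= sin u < 1) by (split; [apply sin_ge_0 | apply sin_lt_1]; lra).
  destruct (sqrt_diff_error_small (sin u) (e / PI) Hr ltac:(apply Rdiv_lt_0_compat; lra))
    as [N0 HN0].
  exists N0. intros N HN. specialize (HN0 N HN). unfold R_dist.
  destruct (gap_PI2_bounds N u Hu) as [Hlo Hhi]. rewrite gap_PI2 in Hlo, Hhi.
  rewrite Rabs_minus_sym, Rabs_pos_eq by lra.
  pose proof (sqrt_diff_error_nonneg N (sin u) Hr).
  assert (u * sqrt_diff_error N (sin u) <= PI / 2 * sqrt_diff_error N (sin u))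
    by (apply Rmult_le_compat_r; lra).
  assert (PI / 2 * sqrt_diff_error N (sin u) < e / 2).
  { replace (e / 2) with (PI / 2 * (e / PI)) by (field; lra).
    apply Rmult_lt_compat_l; lra. }
  unfold u in Hhi at 1. lra.
Qed.

Lemma is_series_from1_0 : is_series (series_from1 0) (3 - 2 * sqrt 2).
Proof.
  apply is_series_incr_1.
  change (is_series (term 0) (3 - 2 * sqrt 2 + term 0 0)).
  replace (3 - 2 * sqrt 2 + term 0 0) with (4 - 2 * sqrt 2); [exact is_series_term0|].
  rewrite term_cb. simpl. field.
Qed.

Lemma is_series_from1_of_certificate (k : nat) (alpha : R) (V : nat -> R) :
  (forall n, term k n = alpha * term 0 n + (V (S n) - V n)) -> is_lim_seq V 0 ->
  is_series (series_from1 k) (alpha * (3 - 2 * sqrt 2) - V 1%nat).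
Proof.
  intros Hcert HV.
  pose proof (is_series_plus _ _ _ _ (is_series_scal alpha _ _ is_series_from1_0)
    (is_series_telescoping (fun n => V (S n)) (proj1 (is_lim_seq_incr_1 V 0) HV))) as Hsum.
  apply is_series_ext with (2 := Hsum).
  intros n. unfold series_from1. symmetry. apply Hcert.
Qed.

Definition cb_ratio (n : nat) : R := cb (2 * n) / cb n.

Definition certificate (p q : R -> R) (n : nat) : R := - p (INR n) / q (INR n) * cb_ratio n.

Lemma is_lim_seq_certificate (p q : R -> R) :
  (forall x, 0 <= x -> 0 <= p x /\ 0 < q x /\ p x * (x + 1) <= q x) ->
  is_lim_seq (certificate p q) 0.
Proof.
  intros Hpq. unfold certificate.
  apply is_lim_seq_le_le with (fun n => - / INR (S n)) (fun _ => 0).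
  - intros n. destruct (Hpq (INR n) (pos_INR n)) as [Hp [Hq Hle]].
    pose proof (cb_pos n). pose proof (cb_pos (2 * n)).
    pose proof (cb_le_of_le n (2 * n) ltac:(lia)).
    assert (Hratio : 0 < cb_ratio n <= 1).
    { split; [apply Rdiv_lt_0_compat; lra|].
      unfold cb_ratio. apply Rmult_le_reg_r with (cb n); [lra|].
      unfold Rdiv. rewrite Rmult_assoc, Rinv_l; lra. }
    rewrite S_INR.
    assert (p (INR n) / q (INR n) <= / (INR n + 1)).
    { apply Rmult_le_reg_r with (q (INR n) * (INR n + 1)); [pose proof (pos_INR n); nra|].
      field_simplify; [lra | pose proof (pos_INR n); lra | lra]. }
    assert (0 <= p (INR n) / q (INR n)) by (apply Rdiv_le_0_compat; lra).
    unfold Rdiv in *. split; nra.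
  - replace (Finite 0) with (Rbar_opp (Rbar_inv p_infty)) by (simpl; f_equal; ring).
    apply (is_lim_seq_opp (fun n => / INR (S n))), (is_lim_seq_inv (fun n => INR (S n)));
      [exact (proj1 (is_lim_seq_incr_1 INR p_infty) is_lim_seq_INR) | discriminate].
  - apply is_lim_seq_const.
Qed.

(* Found by Gosper's algorithm applied to [term k n - alpha_k * term 0 n], for the
   unique [alpha_k] making this hypergeometric term summable. *)
Definition gosper1 : nat -> R := certificate (fun _ => 1 / 15) (fun x => 2 * x + 1).

Definition gosper2 : nat -> R :=
  certificate (fun x => 1 / 20 + 13 / 315 * x) (fun x => (2 * x + 1) * (2 * x + 3)).

Definition gosper3 : nat -> R :=
  certificate (fun x => 135 / 2288 + 13 / 168 * x + 271 / 12012 * x ^ 2)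
    (fun x => (2 * x + 1) * (2 * x + 3) * (2 * x + 5)).

Lemma term1_telescoping n : term 1 n = 7 / 60 * term 0 n + (gosper1 (S n) - gosper1 n).
Proof.
  unfold gosper1, certificate, cb_ratio. rewrite !term_cb.
  replace (2 * S n)%nat with (S (S (2 * n))) by lia.
  replace (n + 1)%nat with (S n) by lia. replace (n + 0)%nat with n by lia.
  rewrite !cb_S, !S_INR, !mult_INR.
  replace (INR 2) with 2 by reflexivity. simpl (INR 1). simpl (INR 0).
  pose proof (cb_pos n). pose proof (cb_pos (2 * n)). pose proof (pos_INR n).
  field. repeat split; lra.
Qed.

Lemma term2_telescoping n : term 2 n = 107 / 5040 * term 0 n + (gosper2 (S n) - gosper2 n).
Proof.
  unfold gosper2, certificate, cb_ratio. rewrite !term_cb.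
  replace (2 * S n)%nat with (S (S (2 * n))) by lia.
  replace (n + 2)%nat with (S (S n)) by lia. replace (S n + 2)%nat with (S (S (S n))) by lia.
  replace (n + 0)%nat with n by lia.
  rewrite !cb_S, !S_INR, !mult_INR.
  replace (INR 2) with 2 by reflexivity. simpl (INR 0).
  pose proof (cb_pos n). pose proof (cb_pos (2 * n)). pose proof (pos_INR n).
  field. repeat split; lra.
Qed.

Lemma term3_telescoping n : term 3 n = 835 / 192192 * term 0 n + (gosper3 (S n) - gosper3 n).
Proof.
  unfold gosper3, certificate, cb_ratio. rewrite !term_cb.
  replace (2 * S n)%nat with (S (S (2 * n))) by lia.
  replace (n + 3)%nat with (S (S (S n))) by lia.
  replace (S n + 3)%nat with (S (S (S (S n)))) by lia.
  replace (n + 0)%nat with n by lia.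
  rewrite !cb_S, !S_INR, !mult_INR.
  replace (INR 2) with 2 by reflexivity. replace (INR 3) with 3 by (simpl; ring). simpl (INR 0).
  pose proof (cb_pos n). pose proof (cb_pos (2 * n)). pose proof (pos_INR n).
  field. repeat split; lra.
Qed.

Lemma is_lim_seq_gosper1 : is_lim_seq gosper1 0.
Proof. apply is_lim_seq_certificate. intros x Hx. repeat split; nra. Qed.

Lemma is_lim_seq_gosper2 : is_lim_seq gosper2 0.
Proof. apply is_lim_seq_certificate. intros x Hx. repeat split; nra. Qed.

Lemma is_lim_seq_gosper3 : is_lim_seq gosper3 0.
Proof. apply is_lim_seq_certificate. intros x Hx. simpl. repeat split; nra. Qed.

Theorem corollary4p0p1 :
  is_series (series_from1 0) (3 - 2 * sqrt 2) /\
  is_series (series_from1 1) ((11 - 7 * sqrt 2) / 30) /\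
  is_series (series_from1 2) ((172 - 107 * sqrt 2) / 2520) /\
  is_series (series_from1 3) ((6808 - 4175 * sqrt 2) / 480480).
Proof.
  split; [exact is_series_from1_0|].
  split; [|split].
  - replace ((11 - 7 * sqrt 2) / 30) with (7 / 60 * (3 - 2 * sqrt 2) - gosper1 1)
      by (unfold gosper1, certificate, cb_ratio; simpl; field).
    exact (is_series_from1_of_certificate 1 _ _ term1_telescoping is_lim_seq_gosper1).
  - replace ((172 - 107 * sqrt 2) / 2520) with (107 / 5040 * (3 - 2 * sqrt 2) - gosper2 1)
      by (unfold gosper2, certificate, cb_ratio; simpl; field).
    exact (is_series_from1_of_certificate 2 _ _ term2_telescoping is_lim_seq_gosper2).
  - replace ((6808 - 4175 * sqrt 2) / 480480)
      with (835 / 192192 * (3 - 2 * sqrt 2) - gosper3 1)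
      by (unfold gosper3, certificate, cb_ratio; simpl; field).
    exact (is_series_from1_of_certificate 3 _ _ term3_telescoping is_lim_seq_gosper3).
Qed.
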